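(* For every integer $n\ge 3$, if $T$ is a standard Young tableau of shape $(n,n)$ chosen uniformly at random, then $$SP\big((n,n),[1,3],[2,1]\big)=\Pr(T_{1,3}>T_{2,1})-\Pr(T_{2,1}>T_{1,3})=\frac{3}{2n-1}=\frac{3}{2}\cdot\frac1n+\frac34\cdot\frac1{n^2}+\frac38\cdot\frac1{n^3}+O\!\left(\frac1{n^4}\right).$$ Consequently, the minimum over all pairs of cells $c_1,c_2$ of the shape $(n,n)$ of $|SP((n,n),c_1,c_2)|$ is $O(1/n)$ as $n\to\infty$.
   Context: A partition (shape) $\lambda=(\lambda_1,\dots,\lambda_k)$ with $\lambda_1\ge\dots\ge\lambda_k>0$ is identified with its Young diagram, the set of cells $[i,j]$ with $1\le i\le k$ and $1\le j\le\lambda_i$ (row $i$, column $j$). A standard Young tableau of shape $\lambda$ with $N=\sum\lambda_i$ cells is a bijective filling $T$ of the cells by $\{1,\dots,N\}$ with $T_{i,j}<T_{i,j+1}$ and $T_{i,j}<T_{i+1,j}$ whenever these cells exist. For cells $c_1,c_2$ of $\lambda$, the sorting probability is $SP(\lambda,c_1,c_2)=\Pr(T_{c_1}>T_{c_2})-\Pr(T_{c_2}>T_{c_1})=2\Pr(T_{c_1}>T_{c_2})-1$, where $T$ is uniformly random among standard Young tableaux of shape $\lambda$. *)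

From mathcomp Require Import all_boot all_order all_algebra.
Set Implicit Arguments. Unset Strict Implicit. Unset Printing Implicit Defensive.
Import Order.TTheory GRing.Theory Num.Theory.

(* Cells are 1-indexed pairs (i, j) (row i, column j), living in the finite
   "box" 'I_(k+1) * 'I_(la_1+1); the Young diagram is the subset in_diag. *)

Definition is_partition (la : seq nat) : bool :=
  sorted geq la && all (fun x => 0 < x) la.

Notation box la := ('I_(size la).+1 * 'I_(head 0%N la).+1)%type.

Definition in_diag (la : seq nat) (c : box la) : bool :=
  (0 < c.1 <= size la)%N && (0 < c.2 <= nth 0%N la c.1.-1)%N.

(* A filling of the box by numbers 0..N (N = |la|); cells outside the
   diagram are required to carry 0, so fillings correspond exactly to
   fillings of the diagram. *)
Notation tab la := {ffun box la -> 'I_(sumn la).+1}.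

Definition is_syt (la : seq nat) (T : tab la) : bool :=
  [&& [forall c : box la, (~~ in_diag c) ==> (T c == ord0)],
      [forall c : box la, in_diag c ==> (0 < T c)%N],
      [forall c : box la, forall d : box la,
          [&& in_diag c, in_diag d & T c == T d] ==> (c == d)],
      [forall k : 'I_(sumn la).+1,
          (0 < k)%N ==> [exists c : box la, in_diag c && (T c == k)]],
      [forall c : box la, forall d : box la,
          [&& in_diag c, in_diag d, (c.1 == d.1 :> nat) & (d.2 == c.2.+1 :> nat)]
            ==> (T c < T d)%N] &
      [forall c : box la, forall d : box la,
          [&& in_diag c, in_diag d, (c.2 == d.2 :> nat) & (d.1 == c.1.+1 :> nat)]
            ==> (T c < T d)%N]].

Definition SP (la : seq nat) (c1 c2 : box la) : rat :=
  ((#|[set T : tab la | is_syt T && (T c2 < T c1)%N]|%:R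
    - #|[set T : tab la | is_syt T && (T c1 < T c2)%N]|%:R)
   / #|[set T : tab la | is_syt T]|%:R)%R.

From mathcomp Require Import all_boot all_order all_algebra.
From mathcomp Require Import zify ring lra.
Import Order.TTheory GRing.Theory Num.Theory.
Set Implicit Arguments. Unset Strict Implicit. Unset Printing Implicit Defensive.

(* A standard Young tableau T of shape (n,n) is encoded by its reading word
   w_1 ... w_2n, where w_k records whether k lies in the second row.  Row and
   column strictness say exactly that this word is a ballot (Dyck) word: every
   prefix has at least as many first-row letters as second-row letters, and
   the totals agree; conversely, the entry of cell (row b, column j) is the
   position of the j-th letter b.  So tableaux of shape (n,n) correspond to
   Dyck paths of length 2n.  Under this bijection T[1,3] < T[2,1] holds iff
   the word starts with three first-row letters, i.e. iff the rest of the word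
   is a ballot path of length 2n-3 from height 3 down to 0.  With the ballot
   numbers D(h, h+2k) = (h+1)/(h+k+1) C(h+2k, k) this gives
   Pr(T[1,3] < T[2,1]) = D(3, 2n-3) / D(0, 2n) = (n-2)/(2n-1), whence
   SP = 1 - 2 (n-2)/(2n-1) = 3/(2n-1). *)

Lemma count_take_S (T : Type) (p : pred T) (x0 : T) (w : seq T) m : m < size w ->
  count p (take m.+1 w) = count p (take m w) + p (nth x0 w m).
Proof. by move=> lt_m; rewrite (take_nth x0 lt_m) -cats1 count_cat /= addn0. Qed.

Lemma count_take_mono (T : Type) (p : pred T) (w : seq T) m m' : m <= m' ->
  count p (take m w) <= count p (take m' w).
Proof.
by move=> le_m; rewrite -(cat_take_drop m (take m' w)) count_cat take_takel ?leq_addr.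
Qed.

(* Position k of w (from 0) carries the j-th occurrence (from 1) of letter b. *)
Definition occ_at (w : seq bool) (b : bool) (j k : nat) : bool :=
  (nth false w k == b) && (count (pred1 b) (take k.+1 w) == j).

Lemma occ_at_uniq w b j k k' : k < size w -> k' < size w ->
  occ_at w b j k -> occ_at w b j k' -> k = k'.
Proof.
wlog le_kk' : k k' / k <= k'.
  move=> sym hk hk' occ occ'; case: (leqP k k') => le; first exact: sym.
  by symmetry; apply: sym => //; apply: ltnW.
rewrite leq_eqVlt in le_kk'; case/orP: le_kk' => [/eqP //|lt_kk'].
move=> _ hk' /andP[_ /eqP cnt] /andP[/eqP wk' /eqP cnt'].
have step := count_take_S (pred1 b) false hk'.
rewrite wk' cnt' /= eqxx addn1 in step.
by have := count_take_mono (pred1 b) w lt_kk'; rewrite cnt step ltnn.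
Qed.

Lemma occ_at_exists w b j : 0 < j -> j <= count (pred1 b) w ->
  exists2 k, k < size w & occ_at w b j k.
Proof.
elim: w j => [|x w IH] j j0 /=; first by rewrite leqNgt j0.
case: (eqVneq x b) => [->|ne] /=.
  rewrite add1n; case: j j0 => // -[|j] _ h.
    by exists 0 => //; rewrite /occ_at /= eqxx take0.
  have [k hk /andP[a c]] := IH j.+1 isT h.
  by exists k.+1 => //; rewrite /occ_at /= a eqxx /= add1n.
rewrite add0n => h.
have [k hk /andP[a c]] := IH j j0 h.
by exists k.+1 => //; rewrite /occ_at /= a /= (negbTE ne) add0n.
Qed.

Lemma no_true_nseq (s : seq bool) : count (pred1 true) s = 0 -> s = nseq (size s) false.
Proof. by elim: s => [|[] s IH] //= /IH {1}->. Qed.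

Lemma occ_before_first_true w j k1 k2 : 0 < j <= size w -> k1 < size w -> k2 < size w ->
  occ_at w false j k1 -> occ_at w true 1 k2 -> (k1 < k2) = (take j w == nseq j false).
Proof.
move=> /andP[j0 jw] hk1 hk2 occ1 /andP[/eqP wk2 /eqP c2].
have none_before : count (pred1 true) (take k2 w) = 0.
  by move: c2; rewrite (count_take_S _ false hk2) wk2 addn1 => -[].
apply/idP/eqP => [lt12|prefix].
  have j_le : j <= k1.+1.
    case/andP: occ1 => _ /eqP <-; rewrite (leq_trans (count_size _ _)) //.
    by rewrite size_take_min geq_minl.
  have : count (pred1 true) (take j w) = 0.
    by apply/eqP; rewrite -leqn0 -none_before count_take_mono // (leq_trans j_le).
  by move/no_true_nseq; rewrite size_take_min (minn_idPl jw).
have occj : occ_at w false j j.-1.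
  rewrite /occ_at prednK // -(nth_take false (ltnSn j.-1)) prednK // prefix.
  by rewrite nth_nseq if_same count_nseq /= mul1n eqxx.
rewrite (occ_at_uniq hk1 _ occ1 occj); last lia.
rewrite ltnNge; apply/negP => le_k2j.
have lt_k2j : k2 < j by lia.
by move: wk2; rewrite -(nth_take false lt_k2j) prefix nth_nseq lt_k2j.
Qed.

Lemma cons_inj (T : Type) (x : T) : injective (cons x).
Proof. by move=> s t []. Qed.

Fixpoint words (m : nat) : seq (seq bool) :=
  if m is m'.+1 then map (cons true) (words m') ++ map (cons false) (words m')
  else [:: [::]].

Lemma mem_words m w : (w \in words m) = (size w == m).
Proof.
elim: m w => [|m IH] [|b w] //=; first by rewrite mem_cat; apply/negP => /orP[] /mapP[].
rewrite mem_cat eqSS -IH.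
have notin c s : (b :: w \in map (cons c) s) = (b == c) && (w \in s).
  case: eqP => [->|ne]; first by rewrite (mem_map (@cons_inj _ c)).
  by apply/mapP => -[v _ [/ne]].
by rewrite !notin; case: (b); rewrite /= ?orbF.
Qed.

Lemma uniq_words m : uniq (words m).
Proof.
elim: m => //= m IH; rewrite cat_uniq !map_inj_uniq ?IH //=; try exact: cons_inj.
by rewrite andbT; apply/hasPn => _ /mapP[w _ ->]; apply/mapP => -[].
Qed.

Lemma count_wordsS (P : pred (seq bool)) m : count P (words m.+1) =
  count (fun w => P (true :: w)) (words m) + count (fun w => P (false :: w)) (words m).
Proof. by rewrite /= count_cat !count_map. Qed.

(* Lattice paths: false is an up-step, true a down-step.  dyck_from h w says
   that the path w started at height h never goes below 0 and ends at 0. *)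
Fixpoint dyck_from (h : nat) (w : seq bool) : bool :=
  match w with
  | [::] => h == 0
  | false :: w' => dyck_from h.+1 w'
  | true :: w' => (0 < h) && dyck_from h.-1 w'
  end.

Lemma dyck_fromP h w : dyck_from h w <->
  (forall m, count (pred1 true) (take m w) <= h + count (pred1 false) (take m w))
  /\ count (pred1 true) w = h + count (pred1 false) w.
Proof.
elim: w h => [|b w IH] h /=.
  by split=> [/eqP -> //|[_]]; rewrite addn0 => <-.
case: b => /=; last first.
  rewrite IH add0n add1n; split=> -[prefix total]; split.
  - by case=> [//|m] /=; rewrite add0n add1n addnS prefix.
  - by rewrite total addnS.
  - by move=> m; have := prefix m.+1; rewrite /= add0n add1n addnS.
  - by move: total; rewrite addnS.
case: h => [|h] /=.
  by split=> // -[prefix _]; have := prefix 1; rewrite /= take0.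
rewrite IH add0n add1n; split=> -[prefix total]; split.
- by case=> [//|m] /=; rewrite add0n add1n addSn ltnS prefix.
- by rewrite total addSn.
- by move=> m; have := prefix m.+1; rewrite /= add0n add1n addSn ltnS.
- by move: total; rewrite addSn => -[].
Qed.

Definition ballot_num (h m : nat) : nat := count (dyck_from h) (words m).

Lemma ballot_numS h m :
  ballot_num h m.+1 = ballot_num h.+1 m + (if h is h'.+1 then ballot_num h' m else 0).
Proof.
rewrite /ballot_num count_wordsS addnC; congr (_ + _).
by case: h => [|h]; [rewrite (@eq_count _ _ pred0) ?count_pred0 | apply: eq_count].
Qed.

Lemma ballot_num_small h m : m < h -> ballot_num h m = 0.
Proof.
elim: m h => [|m IH] [|h] // lt_mh.
by rewrite ballot_numS (IH h) // (IH h.+2) //; lia.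
Qed.

Lemma ballot_num_diag h : ballot_num h h = 1.
Proof. by elim: h => // h IH; rewrite ballot_numS ballot_num_small. Qed.

Definition binom_pred (N k : nat) : nat := if k is k'.+1 then 'C(N, k') else 0.

Lemma binS_pred N k : 'C(N.+1, k) = 'C(N, k) + binom_pred N k.
Proof. by case: k => [|k] /=; rewrite ?bin0 ?addn0 // binS. Qed.

Lemma ballot_num_binom h k :
  ballot_num h (h + k.*2) + binom_pred (h + k.*2) k = 'C(h + k.*2, k).
Proof.
elim: k h => [|k IHk] h; first by rewrite double0 addn0 ballot_num_diag bin0.
elim: h => [|h IHh].
  have -> : 0 + k.+1.*2 = (1 + k.*2).+1 by rewrite doubleS add0n add1n.
  rewrite ballot_numS /= addn0 binS_pred addnCA IHk binS.
  have symm : 'C(1 + k.*2, k.+1) = 'C(1 + k.*2, k).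
    rewrite -[in RHS](@bin_sub (1 + k.*2) k); last by rewrite -addnn add1n leqW // leq_addr.
    by congr 'C(_, _); rewrite -addnn add1n subSn ?leq_addr // addnK.
  by rewrite symm.
have -> : h.+1 + k.+1.*2 = (h.+2 + k.*2).+1 by rewrite doubleS !addnS addSn.
have e : h + k.+1.*2 = h.+2 + k.*2 by rewrite doubleS !addnS.
have IHh' := IHh; rewrite e /= in IHh'.
by rewrite ballot_numS /= binS_pred binS -IHh' -(IHk h.+2); lia.
Qed.

Lemma ballot_numE h k : ballot_num h (h + k.*2) * (h + k).+1 = h.+1 * 'C(h + k.*2, k).
Proof.
have := ballot_num_binom h k; case: k => [|k] /=.
  by rewrite double0 !addn0 ballot_num_diag bin0 muln1 mul1n.
have := mul_bin_left (h + k.+1.*2) k.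
have -> : h + k.+1.*2 - k = (h + k.+1).+1 by rewrite doubleS -addnn; lia.
set b := ballot_num _ _; set x := 'C(_, k.+1); set y := 'C(_, k).
by move=> shift sum; nia.
Qed.

Lemma count_dyck_prefix j h m :
  count (fun w => dyck_from h w && (take j w == nseq j false)) (words (j + m))
  = ballot_num (h + j) m.
Proof.
elim: j h => [|j IH] h.
  by rewrite addn0; apply: eq_count => w; rewrite take0 andbT.
rewrite addSn count_wordsS (@eq_count _ _ pred0) ?count_pred0; last first.
  by move=> w /=; rewrite andbF.
by rewrite add0n -addSnnS -IH; apply: eq_count => w.
Qed.

Lemma bin_shift3 m : 'C(6 + m.*2, 3 + m) * ((3 + m) * (2 + m) * (1 + m))
  = (6 + m.*2) * (5 + m.*2) * (4 + m.*2) * 'C(3 + m.*2, m).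
Proof.
have e1 : (6 + m.*2) * 'C(5 + m.*2, 2 + m) = (3 + m) * 'C(6 + m.*2, 3 + m)
  := mul_bin_diag _ _.
have e2 : (5 + m.*2) * 'C(4 + m.*2, 1 + m) = (2 + m) * 'C(5 + m.*2, 2 + m)
  := mul_bin_diag _ _.
have e3 : (4 + m.*2) * 'C(3 + m.*2, m) = (1 + m) * 'C(4 + m.*2, 1 + m)
  := mul_bin_diag _ _.
rewrite -!mulnA e3 !(mulnCA _ (1 + m)) e2 !(mulnCA _ (2 + m)) e1.
by nia.
Qed.

Notation two_rows n := [:: n; n].

Definition in_row2 n (d : box (two_rows n)) : bool := d.1 == 2 :> nat.

(* The reading word of T: its k-th letter (from 0) says whether k+1 lies in row 2. *)
Definition reading_word n (T : tab (two_rows n)) : seq bool :=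
  [seq [exists d, [&& in_diag d, T d == k.+1 :> nat & in_row2 d]] | k <- iota 0 n.*2].

Lemma in_diag_two_rows n (d : box (two_rows n)) : in_diag d = (0 < d.1) && (0 < d.2).
Proof.
case: d => [[[|[|[|i]]] hi] [j hj]] //=; rewrite /in_diag /=.
- by move: hj; rewrite /= ltnS => ->; rewrite andbT.
- by move: hj; rewrite /= ltnS => ->; rewrite andbT.
Qed.

Lemma cell_row n (d : box (two_rows n)) :
  in_diag d -> d.1 = (if in_row2 d then 2 else 1) :> nat.
Proof. by rewrite in_diag_two_rows /in_row2; case: d => [[[|[|[|i]]] hi] [j hj]]. Qed.

Lemma sumn_two_rows n : sumn (two_rows n) = n.*2.
Proof. by rewrite /= addn0 addnn. Qed.

Lemma entry_le n (T : tab (two_rows n)) d : T d <= n.*2.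
Proof. by rewrite -ltnS -(sumn_two_rows n). Qed.

Lemma size_reading_word n (T : tab (two_rows n)) : size (reading_word T) = n.*2.
Proof. by rewrite size_map size_iota. Qed.

Section StandardTableau.
Variables (n : nat) (T : tab (two_rows n)).
Hypothesis syt : is_syt T.

Lemma syt_outside d : ~~ in_diag d -> T d = 0 :> nat.
Proof. by case/and5P: syt => /forallP/(_ d)/implyP out *; rewrite (eqP (out _)). Qed.

Lemma syt_pos d : in_diag d -> 0 < T d.
Proof. by case/and5P: syt => _ /forallP/(_ d)/implyP pos *; apply: pos. Qed.

Lemma syt_inj d d' : in_diag d -> in_diag d' -> T d = T d' :> nat -> d = d'.
Proof.
move=> hd hd' e; case/and5P: syt => _ _ /forallP/(_ d)/forallP/(_ d')/implyP inj *.
by apply/eqP/inj; rewrite hd hd' /=; apply/eqP/val_inj.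
Qed.

Lemma syt_onto x : 0 < x <= n.*2 -> exists2 d, in_diag d & T d = x :> nat.
Proof.
case/andP=> x0 xn; case/and5P: syt => _ _ _ /forallP onto *.
have xl : x < (sumn (two_rows n)).+1 by rewrite sumn_two_rows ltnS.
have /implyP/(_ x0)/existsP[d /andP[hd /eqP e]] := onto (Ordinal xl).
by exists d => //; rewrite e.
Qed.

Lemma syt_row_lt d d' : in_diag d -> in_diag d' -> d.1 = d'.1 :> nat ->
  d'.2 = (d.2).+1 :> nat -> T d < T d'.
Proof.
case/and5P: syt => _ _ _ _ /andP[/forallP/(_ d)/forallP/(_ d')/implyP lt _] h1 h2 h3 h4.
by apply: lt; rewrite h1 h2 h3 h4 !eqxx.
Qed.

Lemma syt_col_lt d d' : in_diag d -> in_diag d' -> d.2 = d'.2 :> nat ->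
  d'.1 = (d.1).+1 :> nat -> T d < T d'.
Proof.
case/and5P: syt => _ _ _ _ /andP[_ /forallP/(_ d)/forallP/(_ d')/implyP lt] h1 h2 h3 h4.
by apply: lt; rewrite h1 h2 h3 h4 !eqxx.
Qed.

Lemma reading_word_entry d : in_diag d -> nth false (reading_word T) (T d).-1 = in_row2 d.
Proof.
move=> hd; have pos := syt_pos hd.
have lt : (T d).-1 < n.*2 by rewrite prednK // entry_le.
rewrite (nth_map 0) ?size_iota // nth_iota // add0n prednK //.
apply/existsP/idP => [[d' /and3P[hd' /eqP e r]]|r]; first by rewrite -(syt_inj hd' hd e).
by exists d; rewrite hd eqxx r.
Qed.

Definition cells_upto (b : bool) (m : nat) : {set box (two_rows n)} :=
  [set d | [&& in_diag d, in_row2 d == b & T d <= m]].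

Lemma count_reading_prefix b m : m <= n.*2 ->
  count (pred1 b) (take m (reading_word T)) = #|cells_upto b m|.
Proof.
elim: m => [|m IH] hm.
  rewrite take0 /=; apply/esym/eqP; rewrite cards_eq0; apply/eqP/setP => d.
  rewrite !inE; apply/negbTE/and3P => -[hd _ le].
  by have := syt_pos hd; rewrite lt0n -leqn0 le.
have hs : m < size (reading_word T) by rewrite size_reading_word.
rewrite (count_take_S _ false) // IH; last exact: ltnW.
have [d0 hd0 e0] : exists2 d, in_diag d & T d = m.+1 :> nat.
  by apply: syt_onto; rewrite ltn0Sn hm.
have := reading_word_entry hd0; rewrite e0 -pred_Sn => ->.
have cellsS d : (d \in cells_upto b m.+1) =
                (d \in cells_upto b m) || ((d == d0) && (in_row2 d0 == b)).
  rewrite !inE leq_eqVlt ltnS.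
  case: (eqVneq d d0) => [->|ne] /=; first by rewrite hd0 e0 eqxx ltnn; case: (_ == b).
  rewrite orbF; case: (boolP (in_diag d)) => //= hd.
  case: (eqVneq (T d : nat) m.+1) => //= e.
  by case/eqP: ne; apply: syt_inj => //; rewrite e e0.
case: (eqVneq (in_row2 d0) b) => eb /=.
  have -> : cells_upto b m.+1 = d0 |: cells_upto b m.
    by apply/setP => d; rewrite cellsS !inE eb eqxx andbT orbC.
  by rewrite cardsU1 inE e0 ltnn !andbF addnC /= eb eqxx.
by rewrite (negbTE eb) addn0; apply: eq_card => d; rewrite cellsS (negbTE eb) andbF orbF.
Qed.

(* The cell above a cell of row 2 carries a smaller entry. *)
Definition cell_above (d : box (two_rows n)) : box (two_rows n) := (inord 1, d.2).

Lemma cell_above_in m d : d \in cells_upto true m -> cell_above d \in cells_upto false m.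
Proof.
rewrite !inE => /and3P[hd /eqP r hm].
have hd1 : in_diag (cell_above d).
  by move: hd; rewrite !in_diag_two_rows /= inordK // => /andP[].
rewrite hd1 /in_row2 /= inordK //= (leq_trans _ hm) // ltnW //.
by apply: syt_col_lt => //=; rewrite inordK //; move: r; rewrite /in_row2 => /eqP ->.
Qed.

Lemma cell_above_inj m : {in cells_upto true m &, injective cell_above}.
Proof.
move=> d d'; rewrite !inE => /and3P[_ r _] /and3P[_ r' _] [e].
case: d d' e r r' => [a b] [a' b'] /= e r r'; rewrite /in_row2 /= in r r'.
by rewrite e; congr pair; apply: ord_inj; move: r r'; rewrite !eqb_id => /eqP -> /eqP ->.
Qed.

Lemma row2_le_row1 m : #|cells_upto true m| <= #|cells_upto false m|.
Proof.
rewrite -(card_in_imset (@cell_above_inj m)); apply: subset_leq_card.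
by apply/subsetP => x /imsetP[d hd ->]; apply: cell_above_in.
Qed.

(* In the end both rows are full: cell_above is onto row 1. *)
Lemma rows_equal : #|cells_upto true n.*2| = #|cells_upto false n.*2|.
Proof.
apply/eqP; rewrite eqn_leq row2_le_row1 /=.
rewrite -(card_in_imset (@cell_above_inj n.*2)); apply: subset_leq_card.
apply/subsetP => d'; rewrite inE => /and3P[hd' /eqP r _].
have d1 := cell_row hd'; rewrite r in d1.
have hd : in_diag ((inord 2, d'.2) : box (two_rows n)).
  by move: hd'; rewrite !in_diag_two_rows /= inordK // => /andP[].
apply/imsetP; exists (inord 2, d'.2); first by rewrite inE hd /in_row2 /= inordK // eqxx entry_le.
rewrite /cell_above /=; case: d' hd' r d1 {hd} => a b /= _ _ e; congr (_, _).
by apply: val_inj; rewrite /= inordK // e.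
Qed.

Lemma reading_word_dyck : dyck_from 0 (reading_word T).
Proof.
have whole m : n.*2 <= m -> take m (reading_word T) = take n.*2 (reading_word T).
  by move=> le; rewrite !take_oversize ?size_reading_word.
apply/dyck_fromP; split => [m|]; rewrite add0n; last first.
  by rewrite -(take_size (reading_word T)) size_reading_word !count_reading_prefix // rows_equal.
case: (leqP m n.*2) => hm; last rewrite (whole m (ltnW hm)).
all: by rewrite !count_reading_prefix // row2_le_row1.
Qed.

End StandardTableau.

Lemma sorted_map_iota (g : nat -> nat) a m :
  (forall j, a <= j -> j.+1 < a + m -> g j < g j.+1) ->
  sorted ltn [seq g j | j <- iota a m].
Proof.
elim: m a => [|m IH] a incr //=.
case: m IH incr => [|m] IH incr //=.
rewrite incr ?leqnn ?addnS ?ltnS ?leq_addr //=.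
have := IH a.+1; rewrite /= => -> // j hj hj'.
by apply: incr; [apply: ltnW | rewrite addnS -addSn].
Qed.

Definition row_entries n (T : tab (two_rows n)) (i : nat) : seq nat :=
  [seq (T (inord i, inord j) : nat) | j <- iota 1 n].

Section RowEntries.
Variables (n : nat) (T : tab (two_rows n)).
Hypothesis syt : is_syt T.

Lemma row_entries_sorted i : 0 < i <= 2 -> sorted ltn (row_entries T i).
Proof.
move=> /andP[i0 i2]; apply: sorted_map_iota => j j1 jn.
by apply: (syt_row_lt syt); rewrite ?in_diag_two_rows /= ?inordK //; lia.
Qed.

Lemma mem_row_entries i x : 0 < i <= 2 ->
  (x \in row_entries T i) = [exists d, [&& in_diag d, d.1 == i :> nat & T d == x :> nat]].
Proof.
move=> /andP[i0 i2]; apply/mapP/existsP => [[j hj ->]|[d /and3P[hd /eqP di /eqP dx]]].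
  move: hj; rewrite mem_iota => /andP[j1 jn].
  exists (inord i, inord j); rewrite in_diag_two_rows /= !inordK ?eqxx ?andbT //; lia.
exists (d.2 : nat).
  move: hd; rewrite mem_iota in_diag_two_rows => /andP[_ ->].
  by rewrite /= add1n ltnS -ltnS ltn_ord.
by rewrite -dx -di !inord_val; case: d {hd di dx}.
Qed.

Lemma entry_in_row i x : 0 < i <= 2 ->
  [exists d, [&& in_diag d, d.1 == i :> nat & T d == x :> nat]] =
  (0 < x <= n.*2) && (nth false (reading_word T) x.-1 == (i == 2)).
Proof.
move=> hi; apply/existsP/andP => [[d /and3P[hd /eqP di /eqP dx]]|[hx /eqP hx_row]].
  by rewrite -dx syt_pos // entry_le (reading_word_entry syt hd) /in_row2 di eqxx.
have [d hd dx] := syt_onto syt hx; exists d; rewrite hd dx eqxx andbT /=.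
have := reading_word_entry syt hd; rewrite dx hx_row => r.
by rewrite (cell_row hd) -r; move: hi; case: i {hx_row r} => [|[|[|i]]].
Qed.

End RowEntries.

(* A standard tableau is determined by its reading word: its rows are the
   increasing lists of their entries. *)
Lemma reading_word_inj n (T T' : tab (two_rows n)) : is_syt T -> is_syt T' ->
  reading_word T = reading_word T' -> T = T'.
Proof.
move=> sT sT' e; apply/ffunP => c.
case: (boolP (in_diag c)) => hc; last first.
  by apply: ord_inj; rewrite (syt_outside sT hc) (syt_outside sT' hc).
have hi : 0 < c.1 <= 2.
  by move: hc; rewrite in_diag_two_rows /= => /andP[-> _]; rewrite -ltnS ltn_ord.
have rows : row_entries T c.1 = row_entries T' c.1.
  apply: (irr_sorted_eq ltn_trans ltnn); rewrite ?row_entries_sorted // => x.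
  by rewrite !mem_row_entries // !entry_in_row // e.
have hj : 0 < c.2 <= n.
  by move: hc; rewrite in_diag_two_rows => /andP[_ ->]; rewrite -ltnS ltn_ord.
have := congr1 (nth 0 ^~ c.2.-1) rows.
rewrite /row_entries !(nth_map 0) ?size_iota ?nth_iota; try lia.
rewrite add1n prednK; last lia.
by rewrite !inord_val => h; apply: ord_inj; move: h; case: c {hc hi rows hj}.
Qed.

(* The inverse map: cell (row b, column j) receives 1 + the position of the
   j-th letter b of w. *)
Definition tableau_of_word n (w : seq bool) : tab (two_rows n) :=
  [ffun c => if in_diag c then
     (if [pick k : 'I_n.*2 | occ_at w (in_row2 c) c.2 k] is Some k then inord k.+1 else ord0)
   else ord0].

Section TableauOfWord.
Variables (n : nat) (w : seq bool).
Hypotheses (size_w : size w = n.*2) (dyck : dyck_from 0 w).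

Lemma ballot_prefix m : count (pred1 true) (take m w) <= count (pred1 false) (take m w).
Proof. by have [prefix _] := (dyck_fromP 0 w).1 dyck; apply: prefix. Qed.

Lemma count_letters b : count (pred1 b) w = n.
Proof.
have [_ balanced] := (dyck_fromP 0 w).1 dyck; rewrite add0n in balanced.
have total : count (pred1 true) w + count (pred1 false) w = n.*2.
  by rewrite -size_w -(count_predC (pred1 true)); congr (_ + _); apply: eq_count => -[].
by move: total; rewrite -balanced addnn => /double_inj <-; case: b.
Qed.

Lemma tableau_of_wordE c : in_diag c -> exists2 k, k < n.*2 &
  occ_at w (in_row2 c) c.2 k /\ (tableau_of_word n w c : nat) = k.+1.
Proof.
move=> hc; have /andP[_ col_pos] : (0 < c.1) && (0 < c.2) by rewrite -in_diag_two_rows.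
have col_le : c.2 <= count (pred1 (in_row2 c)) w by rewrite count_letters -ltnS ltn_ord.
have [k lt_k occ] := occ_at_exists col_pos col_le.
have lt_kn : k < n.*2 by rewrite -size_w.
exists k => //; split => //; rewrite ffunE hc.
case: pickP => [k' occ'|none]; last by have := none (Ordinal lt_kn); rewrite /= occ.
have lt_k' : k' < size w by rewrite size_w ltn_ord.
by rewrite inordK -(occ_at_uniq lt_k lt_k' occ occ') // ltnS sumn_two_rows.
Qed.

Lemma tableau_of_word_onto k : k < n.*2 -> exists2 c, in_diag c &
  (tableau_of_word n w c : nat) = k.+1 /\ in_row2 c = nth false w k.
Proof.
move=> hk; set b := nth false w k; set j := count (pred1 b) (take k.+1 w).
have hk' : k < size w by rewrite size_w.
have j_pos : 0 < j by rewrite /j (count_take_S _ false) // /b /= eqxx addn1.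
have j_le : j <= n by rewrite -(count_letters b) -(take_size w) count_take_mono.
set c : box (two_rows n) := (inord (if b then 2 else 1), inord j).
have hc : in_diag c by rewrite in_diag_two_rows /c /= !inordK //; case: (b).
have rc : in_row2 c = b by rewrite /in_row2 /c /= inordK //; case: (b).
exists c => //; have [k' lt_k' [occ ->]] := tableau_of_wordE hc; split => //.
congr _.+1; apply: (occ_at_uniq _ _ occ); rewrite ?size_w //.
by rewrite /occ_at rc /c /= inordK // eqxx /j eqxx.
Qed.

Lemma tableau_of_word_inj c d : in_diag c -> in_diag d ->
  tableau_of_word n w c = tableau_of_word n w d :> nat -> c = d.
Proof.
move=> hc hd e.
have [k _ [/andP[/eqP kc /eqP jc] ec]] := tableau_of_wordE hc.
have [k' _ [/andP[/eqP kd /eqP jd] ed]] := tableau_of_wordE hd.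
have kk : k = k' by apply/eqP; rewrite -eqSS -ec -ed e.
subst k'; have r : in_row2 c = in_row2 d by rewrite -kc -kd.
have e1 := cell_row hc; rewrite r -(cell_row hd) in e1.
have e2 : c.2 = d.2 :> nat by rewrite -jc -jd r.
by case: c d {hc hd e kc jc ec kd jd ed r} e1 e2 => [a b] [a' b'] /= e1 e2;
   congr pair; apply: ord_inj.
Qed.

(* Rows increase: the j-th letter b precedes the (j+1)-th. *)
Lemma tableau_of_word_row_lt c d : in_diag c -> in_diag d -> c.1 = d.1 :> nat ->
  d.2 = (c.2).+1 :> nat -> tableau_of_word n w c < tableau_of_word n w d.
Proof.
move=> hc hd e1 e2.
have [k _ [/andP[_ /eqP jc] ->]] := tableau_of_wordE hc.
have [k' _ [/andP[_ /eqP jd] ->]] := tableau_of_wordE hd.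
have r : in_row2 c = in_row2 d by rewrite /in_row2 e1.
rewrite ltnS ltnNge; apply/negP => le.
have := count_take_mono (pred1 (in_row2 d)) w (le : k'.+1 <= k.+1).
by rewrite jd -r jc e2 ltnn.
Qed.

(* Columns increase: by the ballot condition the j-th letter of row 2 comes
   after the j-th letter of row 1. *)
Lemma tableau_of_word_col_lt c d : in_diag c -> in_diag d -> c.2 = d.2 :> nat ->
  d.1 = (c.1).+1 :> nat -> tableau_of_word n w c < tableau_of_word n w d.
Proof.
move=> hc hd e2 e1.
have rows := (cell_row hc, cell_row hd); rewrite e1 in rows.
have rc : in_row2 c = false by case: rows; case: (in_row2 c); case: (in_row2 d) => //; lia.
have rd : in_row2 d = true by case: rows; rewrite rc; case: (in_row2 d) => //; lia.
have [k lt_k [/andP[/eqP kc /eqP jc] ->]] := tableau_of_wordE hc.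
have [k' _ [/andP[/eqP kd /eqP jd] ->]] := tableau_of_wordE hd.
rewrite rc in kc jc; rewrite rd in kd jd.
rewrite ltnS ltnNge; apply/negP; rewrite leq_eqVlt => /orP[/eqP kk|lt_k'k].
  by move: kc kd; rewrite kk => ->.
have lt_k_size : k < size w by rewrite size_w.
have before_k : count (pred1 false) (take k w) < c.2.
  by rewrite -jc (count_take_S _ false lt_k_size) kc addn1.
have := leq_trans (ballot_prefix k'.+1) (count_take_mono (pred1 false) w lt_k'k).
by rewrite jd -e2 leqNgt before_k.
Qed.

Lemma tableau_of_word_syt : is_syt (tableau_of_word n w).
Proof.
apply/and5P; split; [ | | | | apply/andP; split ].
- by apply/forallP => c; apply/implyP => hc; rewrite ffunE (negbTE hc).
- by apply/forallP => c; apply/implyP => hc; have [k _ [_ ->]] := tableau_of_wordE hc.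
- apply/forallP => c; apply/forallP => d; apply/implyP => /and3P[hc hd /eqP e].
  by apply/eqP; apply: tableau_of_word_inj => //; rewrite e.
- apply/forallP => x; apply/implyP => x0.
  have hx : x.-1 < n.*2 by rewrite prednK // -ltnS -(sumn_two_rows n) ltn_ord.
  have [c hc [e _]] := tableau_of_word_onto hx.
  by apply/existsP; exists c; rewrite hc /=; apply/eqP/ord_inj; rewrite e prednK.
- apply/forallP => c; apply/forallP => d; apply/implyP => /and4P[hc hd /eqP e1 /eqP e2].
  exact: tableau_of_word_row_lt.
- apply/forallP => c; apply/forallP => d; apply/implyP => /and4P[hc hd /eqP e2 /eqP e1].
  exact: tableau_of_word_col_lt.
Qed.

Lemma reading_word_of_tableau : reading_word (tableau_of_word n w) = w.
Proof.
apply: (@eq_from_nth _ false); first by rewrite size_reading_word size_w.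
move=> k; rewrite size_reading_word => hk.
have [c hc [e r]] := tableau_of_word_onto hk.
by have := reading_word_entry tableau_of_word_syt hc; rewrite e /= r.
Qed.

End TableauOfWord.

Lemma tableau_of_reading_word n (T : tab (two_rows n)) :
  is_syt T -> tableau_of_word n (reading_word T) = T.
Proof.
move=> sT; have [size_w dyck] := (size_reading_word T, reading_word_dyck sT).
apply: reading_word_inj => //; first exact: tableau_of_word_syt size_w dyck.
exact: reading_word_of_tableau size_w dyck.
Qed.

Lemma entry_occ_at n (T : tab (two_rows n)) d : is_syt T -> in_diag d ->
  occ_at (reading_word T) (in_row2 d) d.2 (T d).-1 /\ (T d).-1 < n.*2.
Proof.
move=> hT hd.
have [k lt_k [occ e]] := tableau_of_wordE (size_reading_word T) (reading_word_dyck hT) hd.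
by rewrite tableau_of_reading_word // in e; rewrite e.
Qed.

Definition cell13 n : box (two_rows n) := (inord 1, inord 3).
Definition cell21 n : box (two_rows n) := (inord 2, inord 1).

Lemma cell13_diag n : 3 <= n -> in_diag (cell13 n).
Proof. by move=> n3; rewrite in_diag_two_rows /= !inordK //; lia. Qed.

Lemma cell21_diag n : 3 <= n -> in_diag (cell21 n).
Proof. by move=> n3; rewrite in_diag_two_rows /= !inordK //; lia. Qed.

Lemma entry13_lt_entry21 n (T : tab (two_rows n)) : 3 <= n -> is_syt T ->
  (T (cell13 n) < T (cell21 n)) = (take 3 (reading_word T) == nseq 3 false).
Proof.
move=> n3 hT.
have [occ13 lt13] := entry_occ_at hT (cell13_diag n3).
have [occ21 lt21] := entry_occ_at hT (cell21_diag n3).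
rewrite /in_row2 /= !inordK // in occ13 occ21; last lia.
rewrite -(occ_before_first_true _ _ _ occ13 occ21) ?size_reading_word //; last lia.
have pos13 := syt_pos hT (cell13_diag n3); have pos21 := syt_pos hT (cell21_diag n3).
by rewrite -[RHS](ltn_add2r 1) !addn1 !prednK.
Qed.

(* Entries are distinct, so T[2,1] < T[1,3] is the complementary event. *)
Lemma entry21_lt_entry13 n (T : tab (two_rows n)) : 3 <= n -> is_syt T ->
  (T (cell21 n) < T (cell13 n)) = ~~ (take 3 (reading_word T) == nseq 3 false).
Proof.
move=> n3 hT; rewrite -entry13_lt_entry21 // ltnNge leq_eqVlt negb_or andbC.
suff -> : T (cell13 n) != T (cell21 n) by rewrite andbT.
apply/eqP => /(congr1 val)/(syt_inj hT (cell13_diag n3) (cell21_diag n3)).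
by move/(congr1 (fun d : box _ => val d.1)) => /=; rewrite !inordK.
Qed.

Lemma card_syt_reading n (Q : pred (seq bool)) :
  #|[set T : tab (two_rows n) | is_syt T && Q (reading_word T)]|
  = count (fun w => dyck_from 0 w && Q w) (words n.*2).
Proof.
set A := [set T : tab (two_rows n) | is_syt T && Q (reading_word T)].
have inA T : (T \in A) = is_syt T && Q (reading_word T) by rewrite inE.
rewrite cardE -size_filter -(size_map (@reading_word n)).
apply: perm_size; apply: uniq_perm.
- rewrite map_inj_in_uniq ?enum_uniq // => T T'; rewrite !mem_enum !inA.
  by move=> /andP[hT _] /andP[hT' _]; apply: reading_word_inj.
- exact/filter_uniq/uniq_words.
move=> w; rewrite mem_filter mem_words; apply/mapP/idP => [[T]|].
  rewrite mem_enum inA => /andP[hT hQ] ->.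
  by rewrite reading_word_dyck // hQ size_reading_word eqxx.
case/andP => /andP[dyck hQ] /eqP size_w; exists (tableau_of_word n w).
  by rewrite mem_enum inA tableau_of_word_syt // reading_word_of_tableau // hQ.
by rewrite reading_word_of_tableau.
Qed.

Lemma count_split (T : Type) (s : seq T) (a b : pred T) :
  count (fun x => a x && ~~ b x) s + count (fun x => a x && b x) s = count a s.
Proof. by elim: s => //= x s <-; case: (a x); case: (b x) => /=; lia. Qed.

Local Open Scope ring_scope.

Lemma SP_ballot n : (3 <= n)%N ->
  SP (cell13 n) (cell21 n) =
  ((ballot_num 0 n.*2)%:R - 2 * (ballot_num 3 (n.*2 - 3))%:R) / (ballot_num 0 n.*2)%:R.
Proof.
move=> n3; rewrite /SP.
have prefix3 : count (fun w => dyck_from 0 w && (take 3 w == nseq 3 false)) (words n.*2)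
    = ballot_num 3 (n.*2 - 3).
  have n2 : (3 <= n.*2)%N by lia.
  by have := count_dyck_prefix 3 0 (n.*2 - 3); rewrite subnKC //; apply.
have all_syt : #|[set T : tab (two_rows n) | is_syt T]| = ballot_num 0 n.*2.
  rewrite -[ballot_num _ _](@eq_count _ (fun w => dyck_from 0 w && predT w)) => [|w];
    last by rewrite andbT.
  by rewrite -card_syt_reading; apply: eq_card => T; rewrite !inE andbT.
have before : #|[set T : tab (two_rows n) | is_syt T && (T (cell13 n) < T (cell21 n))%N]|
    = ballot_num 3 (n.*2 - 3).
  rewrite -prefix3 -card_syt_reading; apply: eq_card => T; rewrite !inE.
  by case: (boolP (is_syt T)) => // hT; rewrite entry13_lt_entry21.
have after : #|[set T : tab (two_rows n) | is_syt T && (T (cell21 n) < T (cell13 n))%N]|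
    = (ballot_num 0 n.*2 - ballot_num 3 (n.*2 - 3))%N.
  rewrite -prefix3 /ballot_num -(count_split _ _ (fun w => take 3 w == nseq 3 false)) addnK.
  rewrite -card_syt_reading; apply: eq_card => T; rewrite !inE.
  by case: (boolP (is_syt T)) => // hT; rewrite entry21_lt_entry13.
have le_D3_D0 : (ballot_num 3 (n.*2 - 3) <= ballot_num 0 n.*2)%N.
  by rewrite -before -all_syt; apply/subset_leq_card/subsetP => T; rewrite !inE => /andP[].
by rewrite all_syt before after natrB // mulr_natl mulr2n opprD addrA.
Qed.

(* D(0, 2n) - 2 D(3, 2n-3) = 3/(2n-1) D(0, 2n), written with n = m + 3. *)
Lemma ballot_ratio m :
  ((ballot_num 0 (6 + m.*2))%:R - 2 * (ballot_num 3 (3 + m.*2))%:R)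
    / (ballot_num 0 (6 + m.*2))%:R = 3 / (5 + m.*2)%:R :> rat.
Proof.
have D0E : (ballot_num 0 (6 + m.*2) * (4 + m) = 'C(6 + m.*2, 3 + m))%N.
  by have := ballot_numE 0 (3 + m); rewrite mul1n; apply.
have D3E : (ballot_num 3 (3 + m.*2) * (4 + m) = 4 * 'C(3 + m.*2, m))%N := ballot_numE 3 m.
have shift := bin_shift3 m; rewrite -D0E in shift.
have c3_gt0 : (0 < 'C(3 + m.*2, m))%N by rewrite bin_gt0; lia.
set d0 := ballot_num 0 _ in shift *; set d3 := ballot_num 3 _ in D3E *.
set c3 := 'C(_, m) in c3_gt0 D3E shift.
move: c3_gt0; rewrite -(ltr0n rat) => c3_gt0.
move: D3E shift => /(congr1 (fun k => k%:R : rat)) D3E /(congr1 (fun k => k%:R : rat)) shift.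
have dbl : (m.*2)%:R = 2 * m%:R :> rat by rewrite -mul2n natrM.
rewrite /= !natrM !natrD dbl in D3E shift *.
have x0 := ler0n rat m; set x := m%:R in x0 dbl D3E shift *.
have -> : d0%:R = (6 + 2 * x) * (5 + 2 * x) * (4 + 2 * x) * c3%:R
                  / ((4 + x) * (3 + x) * (2 + x) * (1 + x)).
  by rewrite -shift; field; repeat (apply/andP; split); apply/eqP; lra.
have -> : d3%:R = 4 * c3%:R / (4 + x) by rewrite -D3E; field; apply/eqP; lra.
by field; repeat (apply/andP; split); apply/eqP; lra.
Qed.

Lemma SP_cell13_cell21 n : (3 <= n)%N -> SP (cell13 n) (cell21 n) = 3 / (2 * n%:R - 1).
Proof.
move=> n3; rewrite SP_ballot // -(subnKC n3).
set m := (n - 3)%N.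
have -> : ((3 + m).*2 = 6 + m.*2)%N by rewrite doubleD.
have -> : (6 + m.*2 - 3 = 3 + m.*2)%N by lia.
by rewrite ballot_ratio -mul2n natrD natrM natrD; congr (_ / _); ring.
Qed.

(* Third-order expansion: 3/(2n-1) = 3/(2n) + 3/(4n^2) + 3/(8n^3) + 3/(8n^3(2n-1)). *)
Lemma expansion_error (n : nat) : (3 <= n)%N ->
  `| 3 / (2 * n%:R - 1) - (3/2 / n%:R + 3/4 / n%:R ^+ 2 + 3/8 / n%:R ^+ 3) |
    <= (3/8 : rat) / n%:R ^+ 4.
Proof.
move=> n3; have x3 : (3 : rat) <= n%:R by rewrite (ler_nat _ 3 n).
set x : rat := n%:R in x3 *.
have x0 : x != 0 by apply/eqP; lra.
have y0 : 2 * x - 1 != 0 by apply/eqP; lra.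
have -> : 3 / (2 * x - 1) - (3/2 / x + 3/4 / x ^+ 2 + 3/8 / x ^+ 3)
       = 3 / (8 * x ^+ 3 * (2 * x - 1)) by field; rewrite x0 y0.
have pos : 0 < 8 * x ^+ 3 * (2 * x - 1) by rewrite !mulr_gt0 ?exprn_gt0 //; lra.
rewrite ger0_norm; last by rewrite divr_ge0 // ltW.
rewrite -subr_ge0.
have -> : 3 / 8 / x ^+ 4 - 3 / (8 * x ^+ 3 * (2 * x - 1))
        = 3 * (x - 1) / (8 * x ^+ 3 * (2 * x - 1) * x) by field; rewrite x0 y0.
by rewrite divr_ge0 // ?ltW ?mulr_gt0 //; lra.
Qed.

Lemma SP_bound (n : nat) : (3 <= n)%N -> `| 3 / (2 * n%:R - 1) | <= (3 : rat) / n%:R.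
Proof.
move=> n3; have x3 : (3 : rat) <= n%:R by rewrite (ler_nat _ 3 n).
set x : rat := n%:R in x3 *.
have x0 : x != 0 by apply/eqP; lra.
have y0 : 2 * x - 1 != 0 by apply/eqP; lra.
rewrite ger0_norm; last by rewrite divr_ge0 //; lra.
rewrite -subr_ge0.
have -> : 3 / x - 3 / (2 * x - 1) = 3 * (x - 1) / (x * (2 * x - 1)) by field; rewrite x0 y0.
by rewrite divr_ge0 // ?ltW ?mulr_gt0 //; lra.
Qed.

Theorem mainTheorem1 :
  (forall n : nat, (3 <= n)%N ->
     SP (la := [:: n; n]) (inord 1, inord 3) (inord 2, inord 1)
       = 3 / (2 * n%:R - 1 : rat))
  /\ (exists C : rat, forall n : nat, (3 <= n)%N ->
       `| 3 / (2 * n%:R - 1) - (3/2 / n%:R + 3/4 / n%:R ^+ 2 + 3/8 / n%:R ^+ 3) |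
         <= C / n%:R ^+ 4)
  /\ (exists C : rat, forall n : nat, (3 <= n)%N ->
       exists c1 c2 : box [:: n; n],
         [/\ in_diag c1, in_diag c2, c1 != c2 & `| SP c1 c2 | <= C / n%:R]).
Proof.
split; first exact: SP_cell13_cell21.
split; first by exists (3/8); apply: expansion_error.
exists 3 => n n3; exists (cell13 n), (cell21 n); split.
- exact: cell13_diag.
- exact: cell21_diag.
- by apply/eqP => -[] /(congr1 val) /=; rewrite !inordK.
- by rewrite SP_cell13_cell21 // SP_bound.
Qed.
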